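(* Let $\mathscr H$ be a complex Hilbert space and $\mathbf{S}=(S_1,\dots,S_d)$, $\mathbf{T}=(T_1,\dots,T_d)\in\mathbb{B}(\mathscr H)^d$ with $S_kT_k=T_kS_k$ for all $k=1,\dots,d$. Then $$w_e(\mathbf{S}\mathbf{T})\le 2\sqrt{d}\,w_e(\mathbf{S})\,w_e(\mathbf{T}).$$
   Context: $\mathbb{B}(\mathscr H)$ denotes the bounded linear operators on $\mathscr H$. For $\mathbf{T}\in\mathbb{B}(\mathscr H)^d$, $w_e(\mathbf{T})=\sup\{(\sum_{k=1}^d|\langle T_kx,x\rangle|^2)^{1/2}: \|x\|=1\}$. Products are componentwise: $\mathbf{S}\mathbf{T}=(S_1T_1,\dots,S_dT_d)$. *)

From HB Require Import structures.
From mathcomp Require Import all_boot all_order all_algebra.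
From mathcomp Require Import complex.
From mathcomp Require Import all_classical all_reals.
Set Implicit Arguments. Unset Strict Implicit. Unset Printing Implicit Defensive.
Import Order.TTheory GRing.Theory Num.Theory.
Local Open Scope ring_scope.
Local Open Scope classical_set_scope.

Section Hilbert.
Variables (R : realType) (H : lmodType R[i]) (ip : H -> H -> R[i]).

Definition is_inner_product : Prop :=
  [/\ (forall (a : R[i]) (x y z : H), ip (a *: x + y) z = a * ip x z + ip y z),
      (forall x y : H, ip y x = conjc (ip x y)),
      (forall x : H, 0 <= ip x x) &
      (forall x : H, ip x x = 0 -> x = 0)].

Definition hnorm (x : H) : R := Num.sqrt (complex.Re (ip x x)).

Definition hcomplete : Prop :=
  forall u : nat -> H,
    (forall e : R, 0 < e -> exists N : nat, forall m n : nat,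
        (N <= m)%N -> (N <= n)%N -> hnorm (u m - u n) < e) ->
    exists l : H, forall e : R, 0 < e -> exists N : nat, forall n : nat,
        (N <= n)%N -> hnorm (u n - l) < e.

Definition is_hilbert_space : Prop := is_inner_product /\ hcomplete.

Definition bounded_op (A : H -> H) : Prop :=
  (forall (a : R[i]) (x y : H), A (a *: x + y) = a *: A x + A y) /\
  exists C : R, forall x : H, hnorm (A x) <= C * hnorm x.

Definition cmod (z : R[i]) : R := complex.Re `|z|.

Definition euclid_op_radius (d : nat) (T : 'I_d -> H -> H) : R :=
  sup [set Num.sqrt (\sum_(k < d) cmod (ip (T k x) x) ^+ 2) | x in [set x : H | hnorm x = 1]].

End Hilbert.

From HB Require Import structures.
From mathcomp Require Import all_boot all_order all_algebra.
From mathcomp Require Import complex.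
From mathcomp Require Import all_classical all_reals.
From mathcomp Require Import ring lra.
Import Order.TTheory GRing.Theory Num.Theory.
Local Open Scope ring_scope.

(* Write w(A) for the numerical radius sup_{||x|| = 1} |<A x, x>|.  The heart
   of the proof is the single-operator estimate w(A B) <= 2 w(A) w(B) for
   commuting A and B.  Normalizing w(A), w(B) <= 1, the operators P = A + B
   and Q = A - B have w(P), w(Q) <= 2 and satisfy P^2 - Q^2 = 4 A B; a
   polarization argument shows |Re <T^2 x, x>| <= w(T)^2 ||x||^2, whence
   Re <A B x, x> <= 2 ||x||^2.  Rotating by a unimodular scalar turns this
   into a bound on |<A B x, x>|, and an epsilon argument removes the
   normalization when w(A) or w(B) vanishes. *)

Local Notation Re := complex.Re.

Lemma le_of_le_affine (R : realFieldType) (u c K : R) : 0 <= K ->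
  (forall e, 0 < e -> e <= 1 -> u <= c + e * K) -> u <= c.
Proof.
move=> hK h; apply/ler_addgt0Pr => eps heps.
pose e := Num.min 1 (eps / (K + 1)).
have hK1 : 0 < K + 1 by lra.
have he0 : 0 < e by rewrite lt_min ltr01 divr_gt0.
have he1 : e <= 1 by rewrite ge_min lexx.
have heK : e * (K + 1) <= eps.
  by rewrite -ler_pdivlMr // ge_min lexx orbT.
apply: le_trans (h e he0 he1) _; nra.
Qed.

(* The supremum of a set of nonnegative reals is nonnegative (an unbounded
   or empty set has supremum 0 by convention). *)
Lemma sup_ge0 (R : realType) (E : set R) : (forall q, E q -> 0 <= q) -> 0 <= sup E.
Proof.
move=> E_ge0; have [hs|hs] := pselect (has_sup E); last by rewrite sup_out.
by case: (hs) => -[q Eq] _; apply: le_trans (E_ge0 q Eq) (sup_upper_bound hs Eq).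
Qed.

Lemma le_sqrt_sum_sqr (R : rcfType) d (f : 'I_d -> R) k :
  (forall j, 0 <= f j) -> f k <= Num.sqrt (\sum_(j < d) f j ^+ 2).
Proof.
move=> f_ge0; rewrite -[f k]ger0_norm // -sqrtr_sqr ler_wsqrtr //.
by rewrite (bigD1 k) //= lerDl sumr_ge0 // => j _; rewrite sqr_ge0.
Qed.

Lemma sqrt_sum_sqr_le (R : rcfType) d (f : 'I_d -> R) (c : R) : 0 <= c ->
  (forall j, 0 <= f j <= c) -> Num.sqrt (\sum_(j < d) f j ^+ 2) <= Num.sqrt d%:R * c.
Proof.
move=> c_ge0 hf; rewrite -[c]ger0_norm // -sqrtr_sqr -sqrtrM ?ler0n //.
rewrite ler_wsqrtr // mulr_natl -[in leRHS](card_ord d) -sumr_const.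
by apply: ler_sum => j _; case/andP: (hf j) => h0 h1; rewrite ler_pXn2r // nnegrE // (le_trans h0 h1).
Qed.

Section ComplexModulus.
Local Open Scope complex_scope.
Context {R : realType}.
Implicit Types (z w l : R[i]) (r : R).

Lemma normcE z : `|z| = (cmod z)%:C.
Proof. by rewrite /cmod RRe_real // normr_real. Qed.

Lemma cmod_ge0 z : 0 <= cmod z.
Proof. by rewrite -lecR -normcE normr_ge0. Qed.

Lemma cmodD z w : cmod (z + w) <= cmod z + cmod w.
Proof. by rewrite -lecR rmorphD /= -!normcE ler_normD. Qed.

Lemma cmodM z w : cmod (z * w) = cmod z * cmod w.
Proof. by apply: complexI; rewrite rmorphM /= -!normcE normrM. Qed.

Lemma cmod_real r : cmod r%:C = `|r|.
Proof. by rewrite /cmod normc_def /= expr0n addr0 sqrtr_sqr. Qed.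

Lemma cmod_i : cmod 'i = 1 :> R.
Proof. by rewrite /cmod normc_def /= expr0n add0r expr1n sqrtr1. Qed.

Lemma Re_le_cmod z : `|Re z| <= cmod z.
Proof. by rewrite /cmod normc_def -sqrtr_sqr ler_wsqrtr // lerDl sqr_ge0. Qed.

Lemma cmod_rotate z : exists2 l, cmod l = 1 & l * z = (cmod z)%:C.
Proof.
have [->|nz] := eqVneq z 0; first by exists 1; rewrite /cmod ?normr1 ?normr0 ?mulr0.
exists (conjc z / `|z|).
  by apply: complexI; rewrite -normcE normrM normcJ normfV normr_id mulfV ?normr_eq0.
by rewrite -normcE mulrAC [conjc z * z]mulrC -sqr_normc expr2 mulfK ?normr_eq0.
Qed.

Lemma Re_realM r z : Re (r%:C * z) = r * Re z.
Proof. by case: z => u v /=; rewrite mul0r subr0. Qed.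

End ComplexModulus.

Section InnerProduct.
Local Open Scope complex_scope.
Context {R : realType} {H : lmodType R[i]} (ip : H -> H -> R[i]).
Hypothesis hip : is_inner_product ip.
Implicit Types (x y z : H) (a l : R[i]) (r p q : R) (A B T : H -> H).

Lemma ipL a x y z : ip (a *: x + y) z = a * ip x z + ip y z.
Proof. by case: hip => h _ _ _; apply: h. Qed.

Lemma ip_conj x y : ip y x = conjc (ip x y).
Proof. by case: hip => _ h _ _; apply: h. Qed.

Lemma ipDl x y z : ip (x + y) z = ip x z + ip y z.
Proof. by have := ipL 1 x y z; rewrite scale1r mul1r. Qed.

Lemma ip0l z : ip 0 z = 0.
Proof. by apply: (addIr (ip 0 z)); rewrite -ipDl !addr0 add0r. Qed.

Lemma ipZl a x z : ip (a *: x) z = a * ip x z.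
Proof. by have := ipL a x 0 z; rewrite !addr0 ip0l addr0. Qed.

Lemma ipNl x z : ip (- x) z = - ip x z.
Proof. by rewrite -scaleN1r ipZl mulN1r. Qed.

Lemma ipDr z x y : ip z (x + y) = ip z x + ip z y.
Proof. by rewrite ip_conj ipDl rmorphD /= -!ip_conj. Qed.

Lemma ipZr z a x : ip z (a *: x) = conjc a * ip z x.
Proof. by rewrite ip_conj ipZl rmorphM /= -ip_conj. Qed.

Lemma ipNr z x : ip z (- x) = - ip z x.
Proof. by rewrite ip_conj ipNl rmorphN /= -ip_conj. Qed.

Definition reip x y : R := Re (ip x y).
Definition nsq x : R := reip x x.

Lemma reipC x y : reip y x = reip x y.
Proof. by rewrite /reip ip_conj; case: (ip x y). Qed.

Lemma reipDl x y z : reip (x + y) z = reip x z + reip y z.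
Proof. by rewrite /reip ipDl raddfD. Qed.

Lemma reipDr z x y : reip z (x + y) = reip z x + reip z y.
Proof. by rewrite /reip ipDr raddfD. Qed.

Lemma reipNl x z : reip (- x) z = - reip x z.
Proof. by rewrite /reip ipNl raddfN. Qed.

Lemma reipNr z x : reip z (- x) = - reip z x.
Proof. by rewrite /reip ipNr raddfN. Qed.

Lemma reipZl r x z : reip (r%:C *: x) z = r * reip x z.
Proof. by rewrite /reip ipZl Re_realM. Qed.

Lemma reipZr r z x : reip z (r%:C *: x) = r * reip z x.
Proof. by rewrite /reip ipZr conjc_real Re_realM. Qed.

Lemma ip_self x : ip x x = (nsq x)%:C.
Proof. by case: hip => _ _ h _; rewrite [LHS]complexE ger0_Im // mulr0 addr0. Qed.

Lemma nsq_ge0 x : 0 <= nsq x.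
Proof. by rewrite -lecR -ip_self; case: hip. Qed.

Lemma nsq_eq0 {x} : nsq x = 0 -> x = 0.
Proof. by move=> h; case: hip => _ _ _; apply; rewrite ip_self h. Qed.

Lemma nsq_rotate l x : cmod l = 1 -> nsq (l *: x) = nsq x.
Proof.
move=> hl; rewrite /nsq /reip ipZl ipZr mulrA -normCK normcE hl.
by rewrite expr1n mul1r.
Qed.

Lemma nsqZ r x : nsq (r%:C *: x) = r ^+ 2 * nsq x.
Proof. by rewrite /nsq reipZl reipZr mulrA expr2. Qed.

(* |Re <x,y>| <= (||x||^2 + ||y||^2) / 2, from the positivity of ||x +- y||^2. *)
Lemma reip_le x y : `|reip x y| <= (nsq x + nsq y) / 2.
Proof.
have p1 := nsq_ge0 (x + y); have p2 := nsq_ge0 (x - y).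
rewrite /nsq !(reipDl, reipDr, reipNl, reipNr) [reip y x]reipC in p1 p2.
by rewrite ler_norml; apply/andP; split; rewrite /nsq; lra.
Qed.

(* The rotated form of [reip_le]: |<x, y>| <= (||x||^2 + ||y||^2) / 2. *)
Lemma cmod_ip_le x y : cmod (ip x y) <= (nsq x + nsq y) / 2.
Proof.
have [l hl hlz] := cmod_rotate (ip x y).
have := reip_le (l *: x) y; rewrite nsq_rotate // /reip ipZl hlz /=.
by apply: le_trans; rewrite ger0_norm ?cmod_ge0.
Qed.

Lemma hnormE x : hnorm ip x = Num.sqrt (nsq x). Proof. by []. Qed.

Lemma hnorm1 x : (hnorm ip x == 1) = (nsq x == 1).
Proof. by rewrite hnormE -[X in _ == X]sqrtr1 eqr_sqrt ?nsq_ge0. Qed.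

Definition linear_op (A : H -> H) : Prop :=
  forall a x y, A (a *: x + y) = a *: A x + A y.

Section LinearOperator.
Variable A : H -> H.
Hypothesis hA : linear_op A.

Lemma lin0 : A 0 = 0.
Proof.
have h := hA 1 0 0; rewrite scale1r addr0 scale1r in h.
by apply: (addrI (A 0)); rewrite addr0 -h.
Qed.

Lemma linD x y : A (x + y) = A x + A y.
Proof. by have := hA 1 x y; rewrite !scale1r. Qed.

Lemma linZ a x : A (a *: x) = a *: A x.
Proof. by have := hA a x 0; rewrite !addr0 lin0 addr0. Qed.

Lemma linN x : A (- x) = - A x.
Proof. by rewrite -scaleN1r linZ scaleN1r. Qed.

End LinearOperator.
Arguments lin0 {A}. Arguments linD {A}. Arguments linZ {A}. Arguments linN {A}.

Lemma linear_opD {A B} : linear_op A -> linear_op B -> linear_op (fun y => A y + B y).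
Proof. by move=> hA hB a x y; rewrite hA hB scalerDr addrACA. Qed.

Lemma linear_opZ c {A} : linear_op A -> linear_op (fun y => c *: A y).
Proof. by move=> hA a x y; rewrite hA scalerDr !scalerA mulrC. Qed.

Definition nr_bound (A : H -> H) (p : R) : Prop :=
  forall y, cmod (ip (A y) y) <= p * nsq y.

Lemma nr_boundW {A p q} : nr_bound A p -> p <= q -> nr_bound A q.
Proof. by move=> hA hpq y; apply: le_trans (hA y) _; rewrite ler_wpM2r ?nsq_ge0. Qed.

Lemma nr_boundZ {A p} a : nr_bound A p -> nr_bound (fun y => a *: A y) (cmod a * p).
Proof. by move=> hA y; rewrite ipZl cmodM -mulrA ler_wpM2l ?cmod_ge0. Qed.

Lemma nr_boundD {A B p q} :
  nr_bound A p -> nr_bound B q -> nr_bound (fun y => A y + B y) (p + q).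
Proof. by move=> hA hB y; rewrite ipDl mulrDl; apply: le_trans (cmodD _ _) (lerD _ _). Qed.

(* If |Re <T y, y>| <= p ||y||^2 for all y, then Re <T^2 x, x> <= p^2 ||x||^2:
   compare the bounds at y = p x + T x and y = p x - T x. *)
Lemma reip_square_le {T p} : linear_op T -> 0 < p ->
  (forall y, `|reip (T y) y| <= p * nsq y) ->
  forall x, reip (T (T x)) x <= p ^+ 2 * nsq x.
Proof.
move=> hT hp hb x.
have := hb (p%:C *: x + T x); have := hb (p%:C *: x - T x).
rewrite !(linD hT, linN hT, linZ hT) /nsq.
rewrite !(reipDl, reipDr, reipNl, reipNr, reipZl, reipZr) [reip x (T x)]reipC.
rewrite !ler_norml => /andP[hv _] /andP[_ hu].
nra.
Qed.

(* A numerical radius bound p for T gives |Re <T^2 x, x>| <= p^2 ||x||^2;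
   the lower bound comes from applying [reip_square_le] to i T. *)
Lemma reip_square_bound {T p} : linear_op T -> 0 < p -> nr_bound T p ->
  forall x, `|reip (T (T x)) x| <= p ^+ 2 * nsq x.
Proof.
move=> hT hp hb x.
have re_bound S : nr_bound S p -> forall y, `|reip (S y) y| <= p * nsq y.
  by move=> hS y; apply: le_trans (Re_le_cmod _) (hS y).
pose iT y := 'i *: T y.
have hiT : linear_op iT by exact: linear_opZ.
have biT : nr_bound iT p by rewrite -[p]mul1r -(@cmod_i R); exact: nr_boundZ.
have := reip_square_le hiT hp (re_bound _ biT) x.
rewrite /iT linZ // scalerA -expr2 sqr_i scaleN1r reipNl => hlo.
rewrite ler_norml (reip_square_le hT hp (re_bound _ hb)) andbT; lra.
Qed.

(* The normalized product estimate: if A and B commute and both have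
   numerical radius at most 1, then Re <A B x, x> <= 2 ||x||^2.  With
   P = A + B and Q = A - B one has P^2 - Q^2 = 4 A B, and both P and Q have
   numerical radius at most 2. *)
Lemma reip_product_le {A B} : linear_op A -> linear_op B ->
  (forall x, A (B x) = B (A x)) -> nr_bound A 1 -> nr_bound B 1 ->
  forall x, reip (A (B x)) x <= 2 * nsq x.
Proof.
move=> hA hB hAB bA bB x.
pose P y := A y + B y; pose Q y := A y + (-1) *: B y.
have lP : linear_op P by exact: linear_opD.
have lQ : linear_op Q by apply: linear_opD => //; exact: linear_opZ.
have cmodN1 : cmod (-1 : R[i]) = 1 by rewrite /cmod normrN normr1.
have bP : nr_bound P 2 by exact: nr_boundD.
have bQ : nr_bound Q 2.
  by apply: nr_boundD => //; apply: nr_boundW (nr_boundZ (-1) bB) _; rewrite cmodN1 mulr1.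
have := reip_square_bound lP (ltr0Sn _ _) bP x.
have := reip_square_bound lQ (ltr0Sn _ _) bQ x.
rewrite /P /Q !(linD hA, linD hB, linZ hA, linZ hB) -!hAB !scaleN1r.
rewrite !(reipDl, reipNl) !ler_norml => /andP[hQ _] /andP[_ hP].
have := nsq_ge0 x; lra.
Qed.

(* Rotating and rescaling reduces the estimate for commuting A, B with
   numerical radii at most a, b > 0 to [reip_product_le]. *)
Lemma nr_bound_product_pos {A B} {a b : R} : linear_op A -> linear_op B ->
  (forall x, A (B x) = B (A x)) -> 0 < a -> 0 < b ->
  nr_bound A a -> nr_bound B b -> nr_bound (fun y => A (B y)) (2 * a * b).
Proof.
move=> hA hB hAB ha hb bA bB y.
have [l hl hlz] := cmod_rotate (ip (A (B y)) y).
pose c := l * (a^-1)%:C; pose e := (b^-1)%:C.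
have bA' : nr_bound (fun u => c *: A u) 1.
  apply: nr_boundW (nr_boundZ c bA) _.
  by rewrite /c cmodM hl mul1r cmod_real gtr0_norm ?invr_gt0 // mulVf // gt_eqF.
have bB' : nr_bound (fun u => e *: B u) 1.
  apply: nr_boundW (nr_boundZ e bB) _.
  by rewrite /e cmod_real gtr0_norm ?invr_gt0 // mulVf // gt_eqF.
have comm u : c *: A (e *: B u) = e *: B (c *: A u).
  by rewrite !(linZ hA, linZ hB) hAB !scalerA mulrC.
have := reip_product_le (linear_opZ c hA) (linear_opZ e hB) comm bA' bB' y.
have -> : reip (c *: A (e *: B y)) y = (a * b)^-1 * cmod (ip (A (B y)) y).
  rewrite (linZ hA) scalerA /reip ipZl (_ : c * e * _ = ((a * b)^-1)%:C * (l * ip (A (B y)) y)).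
    by rewrite hlz -rmorphM.
  by rewrite /c /e invfM !rmorphM /=; ring.
rewrite ler_pdivrMl ?mulr_gt0 //.
by have -> : 2 * a * b * nsq y = a * b * (2 * nsq y) by ring.
Qed.

(* The commuting product estimate w(A B) <= 2 w(A) w(B), where degenerate
   radii a = 0 or b = 0 are handled by letting a + e, b + e decrease to a, b. *)
Lemma nr_bound_product {A B} {a b : R} : linear_op A -> linear_op B ->
  (forall x, A (B x) = B (A x)) -> 0 <= a -> 0 <= b ->
  nr_bound A a -> nr_bound B b -> nr_bound (fun y => A (B y)) (2 * a * b).
Proof.
move=> hA hB hAB ha hb bA bB y; have hy := nsq_ge0 y.
apply: (@le_of_le_affine _ _ _ (2 * (a + b + 1) * nsq y)) => [|e he0 he1].
  by rewrite mulr_ge0 // mulr_ge0 //; lra.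
have bAe : nr_bound A (a + e) by apply: nr_boundW bA _; lra.
have bBe : nr_bound B (b + e) by apply: nr_boundW bB _; lra.
have hae : 0 < a + e by lra.
have hbe : 0 < b + e by lra.
have hen : 0 <= e * nsq y * (1 - e) by rewrite !mulr_ge0 ?subr_ge0 // ltW.
have := nr_bound_product_pos hA hB hAB hae hbe bAe bBe y; nra.
Qed.

(* By homogeneity, a bound on unit vectors is a numerical radius bound. *)
Lemma nr_bound_of_unit {A} {a : R} : linear_op A ->
  (forall u, nsq u = 1 -> cmod (ip (A u) u) <= a) -> nr_bound A a.
Proof.
move=> hA hu y.
have [y0|ny0] := eqVneq (nsq y) 0.
  by rewrite y0 mulr0 (nsq_eq0 y0) (lin0 hA) ip0l /cmod normr0.
have hy : 0 < nsq y by rewrite lt_def ny0 nsq_ge0.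
pose c := (Num.sqrt (nsq y))^-1.
have hc2 : c ^+ 2 * nsq y = 1.
  by rewrite /c exprVn sqr_sqrtr ?ltW // mulVf.
have := hu _ (etrans (nsqZ c y) hc2).
rewrite (linZ hA) ipZl ipZr conjc_real mulrA -rmorphM /= -expr2 cmodM cmod_real.
rewrite ger0_norm ?sqr_ge0 // => h.
by rewrite -[cmod _]mul1r -hc2 mulrC mulrA ler_wpM2r ?nsq_ge0 // mulrC.
Qed.

Lemma bounded_op_unit_nr {A} : bounded_op ip A ->
  exists C, forall u, nsq u = 1 -> cmod (ip (A u) u) <= C.
Proof.
case=> _ [C hC]; exists ((C ^+ 2 + 1) / 2) => u hu.
apply: le_trans (cmod_ip_le _ _) _; rewrite hu ler_pM2r ?invr_gt0 // lerD2r.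
have := hC u; rewrite !hnormE hu sqrtr1 mulr1 => h.
have C_ge0 : 0 <= C := le_trans (sqrtr_ge0 _) h.
by rewrite -(sqr_sqrtr (nsq_ge0 (A u))) ler_pXn2r // ?nnegrE ?sqrtr_ge0.
Qed.

Lemma euclid_op_radius_ge0 {d} (S : 'I_d -> H -> H) : 0 <= euclid_op_radius ip S.
Proof. by apply: sup_ge0 => _ [x _ <-]; apply: sqrtr_ge0. Qed.

Lemma nr_le_euclid_op_radius {d} {S : 'I_d -> H -> H} :
  (forall k, bounded_op ip (S k)) ->
  forall k u, nsq u = 1 -> cmod (ip (S k u) u) <= euclid_op_radius ip S.
Proof.
move=> hS k u hu.
have [C hC] := choice (fun k => bounded_op_unit_nr (hS k)).
have hub : has_ubound [set Num.sqrt (\sum_(j < d) cmod (ip (S j x) x) ^+ 2)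
                       | x in [set x | hnorm ip x = 1]].
  exists (Num.sqrt (\sum_(j < d) C j ^+ 2)) => _ [x /eqP hx <-].
  rewrite ler_wsqrtr // ler_sum // => j _.
  have hxj : cmod (ip (S j x) x) <= C j by apply: hC; apply/eqP; rewrite -hnorm1.
  by rewrite ler_pXn2r // nnegrE ?cmod_ge0 // (le_trans _ hxj) ?cmod_ge0.
apply: le_trans (ub_le_sup hub _); last by exists u => //; apply/eqP; rewrite hnorm1 hu.
by apply: le_sqrt_sum_sqr => j; exact: cmod_ge0.
Qed.

Lemma euclid_op_radius_le {d} {S : 'I_d -> H -> H} {c : R} : 0 <= c ->
  (forall k u, nsq u = 1 -> cmod (ip (S k u) u) <= c) ->
  euclid_op_radius ip S <= Num.sqrt d%:R * c.
Proof.
move=> c_ge0 hc; rewrite /euclid_op_radius.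
have [[x0 hx0]|no_unit] := pselect (exists x, hnorm ip x = 1); last first.
  by rewrite sup_out ?mulr_ge0 ?sqrtr_ge0 // => -[[_ [x hx _]] _]; apply: no_unit; exists x.
apply: ge_sup; first by exists (Num.sqrt (\sum_(j < d) cmod (ip (S j x0) x0) ^+ 2)); exists x0.
move=> _ [x /eqP hx <-]; apply: sqrt_sum_sqr_le => // j.
by rewrite cmod_ge0 hc //; apply/eqP; rewrite -hnorm1.
Qed.

End InnerProduct.

Theorem mainTheorem6 (R : realType) (H : lmodType R[i]) (ip : H -> H -> R[i])
  (hH : is_hilbert_space ip) (d : nat) (S T : 'I_d -> H -> H)
  (hS : forall k, bounded_op ip (S k)) (hT : forall k, bounded_op ip (T k))
  (hST : forall k x, S k (T k x) = T k (S k x)) :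
  euclid_op_radius ip (fun k => S k \o T k)
    <= 2 * Num.sqrt (d%:R : R) * euclid_op_radius ip S * euclid_op_radius ip T.
Proof.
case: hH => hip _.
have ha := euclid_op_radius_ge0 ip S; have hb := euclid_op_radius_ge0 ip T.
set a := euclid_op_radius ip S in ha *; set b := euclid_op_radius ip T in hb *.
have bS k : nr_bound ip (S k) a.
  exact (nr_bound_of_unit ip hip (hS k).1 (nr_le_euclid_op_radius ip hip hS k)).
have bT k : nr_bound ip (T k) b.
  exact (nr_bound_of_unit ip hip (hT k).1 (nr_le_euclid_op_radius ip hip hT k)).
have -> : 2 * Num.sqrt d%:R * a * b = Num.sqrt d%:R * (2 * a * b) by ring.
apply: (euclid_op_radius_le ip hip) => [|k u hu]; first by rewrite !mulr_ge0.
have := nr_bound_product ip hip (hS k).1 (hT k).1 (hST k) ha hb (bS k) (bT k) u.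
by rewrite hu mulr1.
Qed.
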